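(* Let $n\geq 3$, $a>1$, $p,q\in\mathbb{R}$, and let $f_t(x)$, $x\in[1,a]$, solve $$\dot f=u''(x)\left(\frac{f''}{1+f'^2}+(n-1)\frac{xf'-f}{x^2+f^2}\right),\qquad f_t(1)=q,\ f_t(a)=p,$$ where $f_0$ satisfies the supercritical phase assumption $(n-1)\arctan\left(\frac{f_0}{x}\right)+\arctan(f_0')>(n-2)\frac{\pi}{2}$. Then $f_t(x)>0$ for all $t\geq 0$ for which the flow is defined.
   Context: This is the line bundle mean curvature flow on the blowup of $\mathbb{P}^n$ at a point under Calabi symmetry, written in the Legendre coordinate $x\in[1,a]$: $u''$ is the smooth function of $x$ coming from the Calabi-symmetric K\''ahler form $\omega=i\partial\bar\partial u$ in $a[H]-[E]$ (positive on $(1,a)$, vanishing at the endpoints), and $f$ encodes a Calabi-symmetric form $\alpha_t$ in $p[H]-q[E]$ whose eigenvalues relative to $\omega$ are $f/x$ (multiplicity $n-1$) and $f'$, so its angle is $\Theta=(n-1)\arctan(f/x)+\arctan(f')$. The supercritical phase condition $\Theta>(n-2)\frac\pi2$ is preserved along the flow. *)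

From Stdlib Require Import Reals.
From Coquelicot Require Import Coquelicot.
Open Scope R_scope.

Definition smooth_fun (phi : R -> R) : Prop :=
  exists d : nat -> R -> R, d O = phi /\
    forall (k : nat) (x : R), is_derive (d k) x (d (S k) x).

(* f : R -> R -> R, (t, x) |-> f t x, is jointly C^infinity on the open
   half-plane { t < T } (which contains [0,T) x [1,a]): all mixed partial
   derivatives g i j = d_t^i d_x^j f exist there and are jointly continuous. *)
Definition smooth_before (T : Rbar) (f : R -> R -> R) : Prop :=
  exists g : nat -> nat -> R -> R -> R, g O O = f /\
    forall (i j : nat) (t x : R), Rbar_lt t T ->
      is_derive (fun s => g i j s x) t (g (S i) j t x) /\
      is_derive (g i j t) x (g i (S j) t x) /\
      continuous (fun z : R * R => g i j (fst z) (snd z)) (t, x).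

Definition Theta (n : nat) (f : R -> R) (x : R) : R :=
  (INR n - 1) * atan (f x / x) + atan (Derive f x).

(* Right-hand side of the line bundle MCF under Calabi symmetry. *)
Definition lbmcf_rhs (n : nat) (upp : R -> R) (f : R -> R) (x : R) : R :=
  upp x * ( Derive_n f 2 x / (1 + (Derive f x) ^ 2)
          + (INR n - 1) * (x * Derive f x - f x) / (x ^ 2 + (f x) ^ 2) ).

(* At time 0 the phase condition forces f_0 > 0: as arctan f_0' < pi/2, we get
   (n-1) arctan(f_0/x) > (n-3) pi/2 >= 0.  With delta = min f_0 > 0 and
   C = (n-1) max u'' + 1, consider the minimum of f - delta e^(-Ct) over
   [0,t] x [1,a].  If it were negative it would lie off the parabolic boundary,
   where f >= delta; there f_x = 0, f_xx >= 0 and f_t <= -C delta e^(-Ct), while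
   the equation gives f_t >= -(n-1) u'' f/(x^2+f^2) > -C delta e^(-Ct). *)

From Stdlib Require Import Reals Lra Lia.
From Coquelicot Require Import Coquelicot.
Open Scope R_scope.

Lemma is_derive_neg_right (h : R -> R) (c l : R) :
  is_derive h c l -> l < 0 ->
  exists r, 0 < r /\ forall y, c < y < c + r -> h y < h c.
Proof.
intros Hd Hl. apply is_derive_Reals in Hd.
destruct (Hd (- l) ltac:(lra)) as [r Hr].
exists r; split; [apply cond_pos|]. intros y Hy.
assert (Hq := Hr (y - c) ltac:(lra) ltac:(rewrite Rabs_right; lra)).
replace (c + (y - c)) with y in Hq by ring.
apply Rabs_def2 in Hq.
assert (Hslope : (h y - h c) / (y - c) < 0) by lra.
assert (h y - h c = (h y - h c) / (y - c) * (y - c)) by (field; lra).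
nra.
Qed.

Lemma is_derive_nonneg_of_right_min (h : R -> R) (c l r : R) :
  is_derive h c l -> 0 < r ->
  (forall y, c < y < c + r -> h c <= h y) -> 0 <= l.
Proof.
intros Hd Hr Hmin. apply Rnot_lt_le. intros Hl.
destruct (is_derive_neg_right h c l Hd Hl) as [r' [Hr' Hdec]].
assert (Hm := Rmin_pos r r' Hr Hr').
assert (Rmin r r' <= r) by apply Rmin_l. assert (Rmin r r' <= r') by apply Rmin_r.
assert (Hy1 := Hdec (c + Rmin r r' / 2) ltac:(lra)).
assert (Hy2 := Hmin (c + Rmin r r' / 2) ltac:(lra)).
lra.
Qed.

Lemma is_derive_nonpos_of_left_min (h : R -> R) (c l r : R) :
  is_derive h c l -> 0 < r ->
  (forall y, c - r < y < c -> h c <= h y) -> l <= 0.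
Proof.
intros Hd Hr Hmin.
assert (Hrefl : is_derive (fun y => h (- y)) (- c) (- l)).
{ assert (Hopp : is_derive Ropp (- c) (-1))
    by exact (is_derive_opp (fun y : R => y) (- c) 1 (is_derive_id (- c))).
  rewrite <- (Ropp_involutive c) in Hd.
  assert (H := is_derive_comp h Ropp (- c) l (-1) Hd Hopp).
  replace (- l) with (scal (-1) l) by (unfold scal; simpl; unfold mult; simpl; ring).
  exact H. }
enough (0 <= - l) by lra.
apply (is_derive_nonneg_of_right_min _ (- c) (- l) r Hrefl Hr).
intros y Hy. rewrite Ropp_involutive. apply Hmin. lra.
Qed.

Lemma is_derive2_nonneg_of_right_min (h h1 : R -> R) (c l r : R) :
  (forall y, is_derive h y (h1 y)) -> is_derive h1 c l -> h1 c = 0 -> 0 < r ->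
  (forall y, c < y < c + r -> h c <= h y) -> 0 <= l.
Proof.
intros Hh Hd Hc Hr Hmin. apply Rnot_lt_le. intros Hl.
destruct (is_derive_neg_right h1 c l Hd Hl) as [r' [Hr' Hdec]].
rewrite Hc in Hdec.
assert (Hm := Rmin_pos r r' Hr Hr').
assert (Rmin r r' <= r) by apply Rmin_l. assert (Rmin r r' <= r') by apply Rmin_r.
set (y := c + Rmin r r' / 2).
destruct (MVT_cor2 h h1 c y ltac:(unfold y; lra)) as [xi [Hmvt Hxi]].
{ intros z _. apply is_derive_Reals, Hh. }
assert (h1 xi < 0) by (apply Hdec; unfold y in Hxi; lra).
assert (Hy := Hmin y ltac:(unfold y; lra)).
assert (0 < y - c) by (unfold y; lra).
nra.
Qed.

Lemma INR_ge_3 (n : nat) : (3 <= n)%nat -> 3 <= INR n.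
Proof. intros Hn. replace 3 with (INR 3) by (simpl; ring). now apply le_INR. Qed.

Lemma Theta_supercritical_pos (n : nat) (h : R -> R) (x : R) :
  (3 <= n)%nat -> 0 < x -> Theta n h x > (INR n - 2) * (PI / 2) -> 0 < h x.
Proof.
intros Hn Hx Hphase. unfold Theta in Hphase.
assert (HN := INR_ge_3 n Hn). assert (HPI := PI_RGT_0).
destruct (atan_bound (Derive h x)) as [_ Hder].
assert (Hatan : 0 < atan (h x / x)).
{ apply Rnot_le_lt. intros Hle. nra. }
assert (Hratio : 0 < h x / x).
{ apply Rnot_le_lt. intros Hle. destruct (Rle_lt_or_eq_dec _ _ Hle) as [Hneg|Hzero].
  - apply atan_increasing in Hneg. rewrite atan_0 in Hneg. lra.
  - rewrite Hzero, atan_0 in Hatan. lra. }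
replace (h x) with (h x / x * x) by (field; lra).
now apply Rmult_lt_0_compat.
Qed.

Lemma exp_le_1 (x : R) : x <= 0 -> exp x <= 1.
Proof.
intros Hx. rewrite <- exp_0. destruct (Rle_lt_or_eq_dec _ _ Hx) as [H|H].
- left. now apply exp_increasing.
- now rewrite H.
Qed.

Lemma lbmcf_rhs_lower_bound_at_min (n : nat) (upp h h1 : R -> R)
  (x1 x2 x h2 M b : R) :
  (1 <= n)%nat -> 1 <= x1 -> x1 < x < x2 -> 0 <= upp x <= M ->
  (forall y, is_derive h y (h1 y)) -> is_derive h1 x h2 ->
  (forall y, x1 < y < x2 -> h x <= h y) -> 0 < b -> h x < b ->
  - ((M * (INR n - 1) + 1) * b) < lbmcf_rhs n upp h x.
Proof.
intros Hn Hx1 Hx Hupp Hh Hh1 Hmin Hb Hhb.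
set (r := Rmin (x - x1) (x2 - x)).
assert (Hr : 0 < r) by (apply Rmin_pos; lra).
assert (r <= x - x1) by apply Rmin_l. assert (r <= x2 - x) by apply Rmin_r.
assert (Hcrit : h1 x = 0).
{ apply Rle_antisym.
  - apply (is_derive_nonpos_of_left_min h x _ r (Hh x) Hr).
    intros y Hy. apply Hmin. lra.
  - apply (is_derive_nonneg_of_right_min h x _ r (Hh x) Hr).
    intros y Hy. apply Hmin. lra. }
assert (Hconvex : 0 <= h2).
{ apply (is_derive2_nonneg_of_right_min h h1 x h2 r Hh Hh1 Hcrit Hr).
  intros y Hy. apply Hmin. lra. }
assert (HD1 : forall y, Derive h y = h1 y) by (intros y; apply is_derive_unique, Hh).
assert (HD2 : Derive_n h 2 x = h2).
{ simpl. transitivity (Derive h1 x); [now apply Derive_ext | now apply is_derive_unique]. }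
unfold lbmcf_rhs. rewrite HD2, HD1, Hcrit.
assert (HN : 0 <= INR n - 1) by (apply le_INR in Hn; simpl in Hn; lra).
set (v := h x) in *.
assert (Hquot : v / (x ^ 2 + v ^ 2) < b).
{ destruct (Rle_or_lt v 0) as [Hv|Hv].
  - assert (v / (x ^ 2 + v ^ 2) <= 0).
    { apply Rmult_le_0_r; [lra|]. left. apply Rinv_0_lt_compat. nra. }
    lra.
  - assert (Hden : 1 <= x ^ 2 + v ^ 2) by nra.
    apply Rle_lt_trans with v; [|lra].
    apply Rmult_le_reg_r with (x ^ 2 + v ^ 2); [lra|].
    replace (v / (x ^ 2 + v ^ 2) * (x ^ 2 + v ^ 2)) with v by (field; lra).
    nra. }
replace (h2 / (1 + 0 ^ 2) + (INR n - 1) * (x * 0 - v) / (x ^ 2 + v ^ 2))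
  with (h2 - (INR n - 1) * (v / (x ^ 2 + v ^ 2))) by (field; nra).
assert (upp x * ((INR n - 1) * (v / (x ^ 2 + v ^ 2))) <= M * ((INR n - 1) * b)).
{ apply Rle_trans with (upp x * ((INR n - 1) * b)).
  - apply Rmult_le_compat_l; [lra|]. apply Rmult_le_compat_l; lra.
  - apply Rmult_le_compat_r; nra. }
assert (0 <= upp x * h2) by (apply Rmult_le_pos; lra).
nra.
Qed.

Lemma continuous2_ball (G : R * R -> R) (t x : R) :
  continuous G (t, x) -> forall eps, 0 < eps -> exists d, 0 < d /\
    forall s y, Rabs (s - t) < d -> Rabs (y - x) < d -> Rabs (G (s, y) - G (t, x)) < eps.
Proof.
intros HG eps Heps.
destruct (proj1 (filterlim_locally _ _) HG (mkposreal eps Heps)) as [d Hd].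
exists d; split; [apply cond_pos|].
intros s y Hs Hy. exact (Hd (s, y) (conj Hs Hy)).
Qed.

(* MathComp-Analysis is imported only inside this module, because its notations
   would shadow those of Coquelicot and the Stdlib reals. *)
Module RectangleEVT.
From mathcomp Require Import all_boot all_order all_algebra.
From mathcomp Require Import all_classical all_reals all_analysis.
From mathcomp Require Import Rstruct Rstruct_topology.
Import Order.TTheory GRing.Theory Num.Theory.
Import numFieldNormedType.Exports.
Local Open Scope classical_set_scope.

Lemma continuous_rectangle_min (F : R -> R -> R) (t1 t2 x1 x2 : R) :
  t1 <= t2 -> x1 <= x2 ->
  (forall t x, t1 <= t <= t2 -> x1 <= x <= x2 ->
     Continuity.continuous (fun z : R * R => F (fst z) (snd z)) (t, x)) ->
  exists t0 x0, t1 <= t0 <= t2 /\ x1 <= x0 <= x2 /\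
    forall t x, t1 <= t <= t2 -> x1 <= x <= x2 -> F t0 x0 <= F t x.
Proof.
move=> /RleP t12 /RleP x12 HF.
pose A : set (R * R) := `[t1, t2] `*` `[x1, x2].
pose G := fun z : R * R => F z.1 z.2.
have cA : compact A by apply: compact_setX; apply: segment_compact.
have A0 : A !=set0 by exists (t1, x1); split => /=; rewrite in_itv /= lexx.
have cG : {within A, continuous G}.
  apply: continuous_in_subspaceT => -[t x]; rewrite inE => -[] /=.
  rewrite !in_itv /= => /andP[/RleP h1 /RleP h2] /andP[/RleP h3 /RleP h4].
  apply/(@cvg_ballP R) => e /RltP e0.
  have [d [/RltP d0 Hd]] := continuous2_ball _ t x (HF t x (conj h1 h2) (conj h3 h4)) e e0.
  exists (ball t d, ball x d).
    by split => /=; apply: (@nbhsx_ballx _ R).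
  move=> -[s y] [] /=; rewrite /ball /= => /RltP B1 /RltP B2.
  apply/RltP.
  have E : forall r : R, `|r|%R = Rabs r by [].
  have E2 : forall r1 r2 : R, (r1 - r2)%R = Rminus r1 r2 by [].
  rewrite !E !E2 in B1 B2 *.
  rewrite Rabs_minus_sym; apply: Hd; rewrite Rabs_minus_sym; [exact B1 | exact B2].
have [[t0 x0] + Hmin] := compact_EVT_min A0 cA cG.
rewrite inE => -[] /=; rewrite !in_itv /= => /andP[/RleP h1 /RleP h2] /andP[/RleP h3 /RleP h4].
exists t0, x0; split; [by [] | split; [by [] |]].
move=> t x [/RleP g1 /RleP g2] [/RleP g3 /RleP g4]; apply/RleP.
by apply: (Hmin (t, x)); rewrite inE; split; rewrite /= in_itv /=; apply/andP; split.
Qed.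
End RectangleEVT.
Import RectangleEVT.

Lemma exp_barrier_min_principle (f ft : R -> R -> R) (t1 x1 x2 delta C : R) :
  0 <= t1 -> x1 <= x2 -> 0 < delta -> 0 <= C ->
  (forall t x, 0 <= t <= t1 -> x1 <= x <= x2 ->
     continuous (fun z : R * R => f (fst z) (snd z)) (t, x)) ->
  (forall t x, 0 < t <= t1 -> x1 < x < x2 -> is_derive (fun s => f s x) t (ft t x)) ->
  (forall x, x1 <= x <= x2 -> delta <= f 0 x) ->
  (forall t, 0 <= t <= t1 -> delta <= f t x1 /\ delta <= f t x2) ->
  (forall t x b, 0 < t <= t1 -> x1 < x < x2 ->
     (forall y, x1 <= y <= x2 -> f t x <= f t y) -> 0 < b -> f t x < b ->
     - (C * b) < ft t x) ->
  forall t x, 0 <= t <= t1 -> x1 <= x <= x2 -> delta * exp (- C * t) <= f t x.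
Proof.
intros Ht1 Hx12 Hdelta HC Hcont Hft Hinit Hbdry Hpde.
set (barrier := fun t => delta * exp (- C * t)).
set (F := fun t x => f t x - barrier t).
destruct (continuous_rectangle_min F 0 t1 x1 x2 Ht1 Hx12) as [t0 [x0 [Ht0 [Hx0 Hmin]]]].
{ intros t x Ht Hx. apply (continuous_minus (fun z : R * R => f (fst z) (snd z))
                                            (fun z => barrier (fst z))).
  - now apply Hcont.
  - apply continuous_comp; [apply continuous_fst|].
    apply ex_derive_continuous. unfold barrier. auto_derive. exact I. }
enough (HF0 : 0 <= F t0 x0).
{ intros t x Ht Hx. assert (Htx := Hmin t x Ht Hx). unfold F, barrier in *. lra. }
apply Rnot_lt_le. intros Hneg. unfold F in Hneg.
assert (Hb : 0 < barrier t0) by (apply Rmult_lt_0_compat; [exact Hdelta | apply exp_pos]).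
assert (Ht0pos : 0 < t0).
{ destruct (Rle_lt_or_eq_dec 0 t0 (proj1 Ht0)) as [H|H]; [exact H|].
  subst t0. unfold barrier in Hneg. rewrite Rmult_0_r, exp_0 in Hneg.
  specialize (Hinit x0 Hx0). lra. }
assert (Hx0int : x1 < x0 < x2).
{ assert (barrier t0 <= delta).
  { unfold barrier. rewrite <- (Rmult_1_r delta) at 2.
    apply Rmult_le_compat_l; [lra|]. apply exp_le_1. nra. }
  destruct (Hbdry t0 Ht0) as [Hb1 Hb2].
  destruct Hx0 as [[Hl|Hl] [Hr|Hr]]; subst; split; lra. }
assert (Hspace : forall y, x1 <= y <= x2 -> f t0 x0 <= f t0 y).
{ intros y Hy. assert (H := Hmin t0 y Ht0 Hy). unfold F in H. lra. }
assert (Hbarrier : is_derive barrier t0 (- C * barrier t0))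
  by (unfold barrier; auto_derive; [exact I | ring]).
assert (Htime : ft t0 x0 - (- C * barrier t0) <= 0).
{ apply (is_derive_nonpos_of_left_min (fun s => F s x0) t0 _ t0); [|exact Ht0pos|].
  - exact (is_derive_minus (fun s => f s x0) barrier t0 _ _
             (Hft t0 x0 (conj Ht0pos (proj2 Ht0)) Hx0int) Hbarrier).
  - intros s Hs. apply Hmin; lra. }
assert (H := Hpde t0 x0 (barrier t0) (conj Ht0pos (proj2 Ht0)) Hx0int Hspace Hb ltac:(lra)).
lra.
Qed.

Lemma Theta_supercritical_lower_bound (n : nat) (h : R -> R) (a : R) :
  (3 <= n)%nat -> 1 <= a -> (forall x, 1 <= x <= a -> continuity_pt h x) ->
  (forall x, 1 <= x <= a -> Theta n h x > (INR n - 2) * (PI / 2)) ->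
  exists delta, 0 < delta /\ forall x, 1 <= x <= a -> delta <= h x.
Proof.
intros Hn Ha Hcont Hphase.
destruct (continuity_ab_min h 1 a Ha Hcont) as [xm [Hxm Hxm_in]].
exists (h xm); split; [|exact Hxm].
apply (Theta_supercritical_pos n); [exact Hn | lra | exact (Hphase xm Hxm_in)].
Qed.

Lemma smooth_fun_continuous (phi : R -> R) (x : R) :
  smooth_fun phi -> continuity_pt phi x.
Proof.
intros [d [Hd0 Hd]].
apply continuity_pt_filterlim, (@ex_derive_continuous R_AbsRing R_NormedModule).
exists (d 1%nat x). rewrite <- Hd0. apply Hd.
Qed.

Theorem lemma4p3 (n : nat) (a p q : R) (upp : R -> R) (T : Rbar)
  (f : R -> R -> R) :
  (3 <= n)%nat ->
  1 < a ->
  (* u'' : smooth, positive on (1,a), vanishing at the endpoints *)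
  smooth_fun upp ->
  upp 1 = 0 -> upp a = 0 ->
  (forall x, 1 < x < a -> 0 < upp x) ->
  (* the flow exists (smoothly) on [0,T), T > 0 possibly +oo *)
  Rbar_lt 0 T ->
  smooth_before T f ->
  (forall t x, 0 < t -> Rbar_lt t T -> 1 < x < a ->
     Derive (fun s => f s x) t = lbmcf_rhs n upp (f t) x) ->
  (forall t, 0 <= t -> Rbar_lt t T -> f t 1 = q /\ f t a = p) ->
  (* supercritical phase for f_0 *)
  (forall x, 1 <= x <= a -> Theta n (f 0) x > (INR n - 2) * (PI / 2)) ->
  forall t x, 0 <= t -> Rbar_lt t T -> 1 <= x <= a -> 0 < f t x.
Proof.
intros Hn Ha Hupp Hu1 _ Hupos HT0 [g [Hg0 Hg]] Heq Hbd Hphase t x Ht HtT Hx.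
subst f.
assert (Hbefore : forall s, s <= t -> Rbar_lt s T)
  by (intros s Hs; now apply Rbar_le_lt_trans with t).
assert (Hg_t := fun i j s y Hs => Hg i j s y (Hbefore s Hs)).
destruct (Theta_supercritical_lower_bound n (g 0%nat 0%nat 0) a Hn ltac:(lra))
  as [delta [Hdelta Hinit]]; [|exact Hphase|].
{ intros y _. apply continuity_pt_filterlim, (@ex_derive_continuous R_AbsRing R_NormedModule).
  eexists. apply (Hg 0%nat 0%nat 0 y HT0). }
destruct (continuity_ab_maj upp 1 a) as [xM [HxM _]]; [lra|intros y _; now apply smooth_fun_continuous|].
assert (HM : 0 <= upp xM) by (rewrite <- Hu1; apply HxM; lra).
set (C := upp xM * (INR n - 1) + 1).
apply Rlt_le_trans with (delta * exp (- C * t)); [apply Rmult_lt_0_compat; [exact Hdelta | apply exp_pos]|].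
apply (exp_barrier_min_principle (g 0%nat 0%nat) (g 1%nat 0%nat) t 1 a delta C); try lra.
- unfold C. assert (HN := INR_ge_3 n Hn). nra.
- intros s y Hs _. apply (Hg_t 0%nat 0%nat s y (proj2 Hs)).
- intros s y Hs _. apply (Hg_t 0%nat 0%nat s y (proj2 Hs)).
- exact Hinit.
- intros s Hs.
  destruct (Hbd s (proj1 Hs) (Hbefore s (proj2 Hs))) as [-> ->].
  destruct (Hbd 0 (Rle_refl 0) HT0) as [<- <-].
  split; apply Hinit; lra.
- intros s y b Hs Hy Hmin Hb Hyb.
  rewrite <- (is_derive_unique _ _ _ (proj1 (Hg_t 0%nat 0%nat s y (proj2 Hs)))).
  rewrite Heq by (lra || apply Hbefore; lra).
  apply (lbmcf_rhs_lower_bound_at_min n upp (g 0%nat 0%nat s) (g 0%nat 1%nat s) 1 a y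
           (g 0%nat 2%nat s y)); try lra; try lia.
  + split; [left; now apply Hupos | apply HxM; lra].
  + intros z. apply (Hg_t 0%nat 0%nat s z (proj2 Hs)).
  + apply (Hg_t 0%nat 1%nat s y (proj2 Hs)).
  + intros z Hz. apply Hmin. lra.
Qed.
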